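(* Let $\mathcal{S}_1,\dots,\mathcal{S}_L$ be finitely many finite subsets of $\mathbb{C}$, each having non-zero coordinate product distance. For $\theta\in[0,2\pi]$ and $x=(x^1,\dots,x^6)\in\mathbb{C}^6$, let $X'_\theta(x)$ be the $3\times 4$ matrix $$X'_\theta(x)=\begin{bmatrix} x^{1R}+jx^{3I} & -x^{2R}+jx^{4I} & e^{j\theta}(x^{5R}+jx^{6I}) & e^{j\theta}(-x^{3R}+jx^{1I})\\ x^{2R}+jx^{4I} & x^{1R}-jx^{3I} & e^{j\theta}(x^{4R}+jx^{2I}) & e^{j\theta}(x^{5R}-jx^{6I})\\ e^{j\theta}(x^{6R}+jx^{5I}) & e^{j\theta}(-x^{6R}+jx^{5I}) & x^{3R}+jx^{1I} & -x^{4R}+jx^{2I} \end{bmatrix}.$$ Then there exists $\theta\in[0,2\pi]$ such that for every $\ell\in\{1,\dots,L\}$ and every two distinct tuples $x\neq y$ in $\mathcal{S}_\ell^6$, the difference matrix $X'_\theta(x)-X'_\theta(y)$ has rank $3$.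
   Context: For a complex number $a$, $a^R$ and $a^I$ denote its real and imaginary parts, and $j=\sqrt{-1}$. The coordinate product distance (CPD) between two distinct points $u,v$ of a finite set $\mathcal{S}\subset\mathbb{C}$ is $|u^R-v^R|\,|u^I-v^I|$; the CPD of $\mathcal{S}$ is the minimum of this quantity over all pairs of distinct points of $\mathcal{S}$. (So non-zero CPD means any two distinct points differ in both real and imaginary parts.) *)

From Stdlib Require Import Reals List.
Open Scope R_scope.

Definition Cx : Type := (R * R)%type.
Definition Re (a : Cx) : R := fst a.
Definition Im (a : Cx) : R := snd a.
Definition C0 : Cx := (0, 0).
Definition Cadd (a b : Cx) : Cx := (Re a + Re b, Im a + Im b).
Definition Csub (a b : Cx) : Cx := (Re a - Re b, Im a - Im b).
Definition Cmul (a b : Cx) : Cx :=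
  (Re a * Re b - Im a * Im b, Re a * Im b + Im a * Re b).
Definition Cexpj (t : R) : Cx := (cos t, sin t).

Definition cpd2 (u v : Cx) : R := Rabs (Re u - Re v) * Rabs (Im u - Im v).

Definition nonzero_cpd (S : list Cx) : Prop :=
  forall u v, In u S -> In v S -> u <> v -> cpd2 u v <> 0.

(* The matrix X'_theta(x), for x = (x^1,...,x^6) given as x : nat -> Cx
   (indices 1..6 used); rows indexed 0..2, columns 0..3. *)
Definition Xp (t : R) (x : nat -> Cx) (i k : nat) : Cx :=
  let e := Cexpj t in
  let r (a : nat) := Re (x a) in
  let m (a : nat) := Im (x a) in
  match i, k with
  | O, O => (r 1%nat, m 3%nat)
  | 0, 1 => (- r 2%nat, m 4%nat)
  | 0, 2 => Cmul e (r 5%nat, m 6%nat)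
  | 0, 3 => Cmul e (- r 3%nat, m 1%nat)
  | 1, 0 => (r 2%nat, m 4%nat)
  | 1, 1 => (r 1%nat, - m 3%nat)
  | 1, 2 => Cmul e (r 4%nat, m 2%nat)
  | 1, 3 => Cmul e (r 5%nat, - m 6%nat)
  | 2, 0 => Cmul e (r 6%nat, m 5%nat)
  | 2, 1 => Cmul e (- r 6%nat, m 5%nat)
  | 2, 2 => (r 3%nat, m 1%nat)
  | 2, 3 => (- r 4%nat, m 2%nat)
  | _, _ => C0
  end.

Definition rank3_3x4 (M : nat -> nat -> Cx) : Prop :=
  forall c : nat -> Cx,
    (forall k, (k < 4)%nat ->
       Cadd (Cadd (Cmul (c 0%nat) (M 0%nat k)) (Cmul (c 1%nat) (M 1%nat k)))
            (Cmul (c 2%nat) (M 2%nat k)) = C0) ->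
    forall i, (i < 3)%nat -> c i = C0.

Definition tuple6_in (S : list Cx) (x : nat -> Cx) : Prop :=
  forall a, (1 <= a <= 6)%nat -> In (x a) S.

Definition tuple6_neq (x y : nat -> Cx) : Prop :=
  exists a, (1 <= a <= 6)%nat /\ x a <> y a.

From Pilot Require Import Defs.
From Stdlib Require Import Reals List Lia Lra Classical FunctionalExtensionality.
From Coquelicot Require Import Complex.
Open Scope R_scope.

(* Write the difference matrix X'_t(x) - X'_t(y) with the
   coordinate differences d^a = x^a - y^a and e = e^{jt} in block form
         [ Z1    -Z2^*   e W1   e T1 ]
         [ Z2     Z1^*   e W2   e T2 ]
         [ e U1   e U2   W3     T3   ]
   (an Alamouti block in the first two columns).  Since every S_l has non-zero
   CPD, each d^a is either 0 or has both coordinates non-zero.  Hence, for a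
   fixed pair x <> y, either d^1 = ... = d^4 = 0, and the matrix has rank 3
   for every t, or the 3x3 minor of columns 0, 1 and column 2 (resp. 3) has
   determinant  w N - e^2 K  with  N = |Z1|^2 + |Z2|^2 <> 0  and bottom entry
   w = W3 (resp. T3) non-zero; it vanishes for at most one t in (0, pi/2)
   because t |-> e^{2jt} is injective there.  A property
   that fails at most once in (0, pi/2) is "generic": every subinterval of
   [0, pi/2] contains an open subinterval where it holds.  Generic properties
   are closed under finite conjunctions, and the pairs of tuples range over the
   finite set of 6-tuples of values in the S_l, so one t works for all pairs. *)

Definition Generic (Q : R -> Prop) : Prop :=
  forall a b, 0 <= a < b -> b <= PI / 2 ->
  exists a' b', a <= a' /\ a' < b' /\ b' <= b /\ forall t, a' < t < b' -> Q t.

Lemma Generic_true (Q : R -> Prop) : (forall t, 0 < t < PI / 2 -> Q t) -> Generic Q.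
Proof.
  intros H a b Ha Hb. exists a, b. repeat split; try lra.
  intros t Ht. apply H. lra.
Qed.

Lemma Generic_mono (P Q : R -> Prop) : (forall t, P t -> Q t) -> Generic P -> Generic Q.
Proof.
  intros H G a b Ha Hb. destruct (G a b Ha Hb) as (a' & b' & H1 & H2 & H3 & H4).
  exists a', b'. repeat split; auto.
Qed.

(* Nested subintervals: first shrink for P, then shrink again for Q. *)
Lemma Generic_and (P Q : R -> Prop) : Generic P -> Generic Q -> Generic (fun t => P t /\ Q t).
Proof.
  intros GP GQ a b Ha Hb. destruct (GP a b Ha Hb) as (a' & b' & H1 & H2 & H3 & H4).
  destruct (GQ a' b') as (a'' & b'' & K1 & K2 & K3 & K4); try lra.
  exists a'', b''. repeat split; try lra.
  - apply H4; lra.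
  - apply K4; lra.
Qed.

Lemma Generic_forall_In {A : Type} (l : list A) (Q : A -> R -> Prop) :
  (forall z, In z l -> Generic (Q z)) -> Generic (fun t => forall z, In z l -> Q z t).
Proof.
  induction l as [|h l IH]; intros H.
  - apply Generic_true. intros t _ z [].
  - apply (Generic_mono (fun t => Q h t /\ (forall z, In z l -> Q z t))).
    + intros t [H1 H2] z [<-|Hz]; auto.
    + apply Generic_and; [apply H; left; reflexivity|].
      apply IH. intros z Hz. apply H. right. exact Hz.
Qed.

Lemma Generic_one_exception (Q : R -> Prop) :
  (forall t1 t2, 0 < t1 < PI / 2 -> 0 < t2 < PI / 2 -> ~ Q t1 -> ~ Q t2 -> t1 = t2) ->
  Generic Q.
Proof.
  intros H a b Ha Hb.
  destruct (classic (exists t0, a < t0 < b /\ ~ Q t0)) as [[t0 [Ht0 Hn]]|Hno].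
  - exists a, t0. repeat split; try lra.
    intros t Ht. apply NNPP. intro Hq.
    assert (t = t0) by (apply H; auto; lra). lra.
  - exists a, b. repeat split; try lra.
    intros t Ht. apply NNPP. intro Hq. apply Hno. exists t. auto.
Qed.

Open Scope C_scope.

Lemma Cmult_eq0_r (a b : C) : a * b = 0%R -> b <> 0%R -> a = 0%R.
Proof. intros H Hb. replace a with (a * b / b) by (field; auto). rewrite H. field. auto. Qed.

Definition alam_norm (z1 z2 : C) : C := z1 * Cconj z1 + z2 * Cconj z2.

Lemma alam_norm_nz (z1 z2 : C) : z1 <> 0%R \/ z2 <> 0%R -> alam_norm z1 z2 <> 0%R.
Proof.
  intros Hz E.
  assert (Hr : alam_norm z1 z2 = RtoC (Cmod z1 ^ 2 + Cmod z2 ^ 2)).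
  { unfold alam_norm. rewrite <- !Cmod2_conj. unfold RtoC, Cplus. simpl.
    f_equal; ring. }
  rewrite Hr in E. injection E as E.
  pose proof (Cmod_ge_0 z1). pose proof (Cmod_ge_0 z2).
  destruct Hz as [Hz|Hz]; apply Cmod_gt_0 in Hz; nra.
Qed.

(* The determinant of the 3x3 minor
     [[z1, -z2^*, e w1], [z2, z1^*, e w2], [e u1, e u2, w3]]. *)
Definition minor_det (e z1 z2 u1 u2 w1 w2 w3 : C) : C :=
  w3 * alam_norm z1 z2
  - e * e * ((Cconj z1 * u1 - z2 * u2) * w1 + (Cconj z2 * u1 + z1 * u2) * w2).

(* A row vector annihilating a minor with non-zero determinant vanishes; the
   non-singular Alamouti block eliminates c0, c1 in terms of c2. *)
Lemma minor_left_kernel (e z1 z2 u1 u2 w1 w2 w3 c0 c1 c2 : C) :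
  alam_norm z1 z2 <> 0%R ->
  minor_det e z1 z2 u1 u2 w1 w2 w3 <> 0%R ->
  c0 * z1 + c1 * z2 + c2 * (e * u1) = 0%R ->
  c0 * - Cconj z2 + c1 * Cconj z1 + c2 * (e * u2) = 0%R ->
  c0 * (e * w1) + c1 * (e * w2) + c2 * w3 = 0%R ->
  c0 = 0%R /\ c1 = 0%R /\ c2 = 0%R.
Proof.
  intros HN HD E0 E1 E2.
  assert (H2 : c2 = 0%R).
  { apply (Cmult_eq0_r _ (minor_det e z1 z2 u1 u2 w1 w2 w3)); [|exact HD].
    transitivity (alam_norm z1 z2 * (c0 * (e * w1) + c1 * (e * w2) + c2 * w3)
       - e * w1 * (Cconj z1 * (c0 * z1 + c1 * z2 + c2 * (e * u1))
                   - z2 * (c0 * - Cconj z2 + c1 * Cconj z1 + c2 * (e * u2)))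
       - e * w2 * (Cconj z2 * (c0 * z1 + c1 * z2 + c2 * (e * u1))
                   + z1 * (c0 * - Cconj z2 + c1 * Cconj z1 + c2 * (e * u2)))).
    - unfold minor_det, alam_norm. ring.
    - rewrite E0, E1, E2. ring. }
  subst c2. split; [|split; [|reflexivity]];
    apply (Cmult_eq0_r _ (alam_norm z1 z2)); try exact HN.
  - transitivity (Cconj z1 * (c0 * z1 + c1 * z2 + 0%R * (e * u1))
       - z2 * (c0 * - Cconj z2 + c1 * Cconj z1 + 0%R * (e * u2))).
    + unfold alam_norm. ring.
    + rewrite E0, E1. ring.
  - transitivity (Cconj z2 * (c0 * z1 + c1 * z2 + 0%R * (e * u1))
       + z1 * (c0 * - Cconj z2 + c1 * Cconj z1 + 0%R * (e * u2))).
    + unfold alam_norm. ring.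
    + rewrite E0, E1. ring.
Qed.

Lemma sq_determined (A B e1 e2 : C) : A <> 0%R ->
  A - e1 * e1 * B = 0%R -> A - e2 * e2 * B = 0%R -> e1 * e1 = e2 * e2.
Proof.
  intros HA H1 H2.
  assert (HB : B <> 0%R) by (intro HB; subst B; apply HA; rewrite <- H1; ring).
  assert (E : (e1 * e1 - e2 * e2) * B = 0%R)
    by (transitivity ((A - e2 * e2 * B) - (A - e1 * e1 * B)); [ring | rewrite H1, H2; ring]).
  apply (Cmult_eq0_r _ _ E) in HB.
  transitivity ((e1 * e1 - e2 * e2) + e2 * e2); [ring | rewrite HB; ring].
Qed.

(* t |-> e^{2jt} is injective on (0, pi/2), since cos is on (0, pi). *)
Lemma Cexpj_sq_inj t1 t2 : 0 < t1 < PI / 2 -> 0 < t2 < PI / 2 ->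
  Cexpj t1 * Cexpj t1 = Cexpj t2 * Cexpj t2 -> t1 = t2.
Proof.
  intros H1 H2 E. unfold Cexpj, Cmult in E. simpl in E. injection E as E1 _.
  rewrite <- !cos_2a in E1.
  destruct (Rtotal_order t1 t2) as [L|[L|L]]; auto.
  - assert (cos (2 * t2) < cos (2 * t1)) by (apply cos_decreasing_1; lra). lra.
  - assert (cos (2 * t1) < cos (2 * t2)) by (apply cos_decreasing_1; lra). lra.
Qed.

(* |e^{jt}| = 1, so e^{jt} is never zero. *)
Lemma Cexpj_nz t : (Cexpj t : C) <> 0%R.
Proof.
  intro H. unfold Cexpj, RtoC in H. injection H as H1 H2.
  pose proof (sin2_cos2 t) as E. unfold Rsqr in E. rewrite H1, H2 in E. lra.
Qed.

Lemma pair_nz (a b : R) : a <> 0 \/ b <> 0 -> ((a, b) : C) <> 0%R.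
Proof. intros [H|H] E; injection E; intros; auto. Qed.

Close Scope C_scope.

Definition dR (x y : nat -> Cx) (a : nat) : R := Defs.Re (x a) - Defs.Re (y a).
Definition dI (x y : nat -> Cx) (a : nat) : R := Defs.Im (x a) - Defs.Im (y a).

(* The entries of the block form (without the factors e = e^{jt}). *)
Section Entries.
Variables x y : nat -> Cx.
Definition Z1 : C := (dR x y 1, dI x y 3).
Definition Z2 : C := (dR x y 2, dI x y 4).
Definition U1 : C := (dR x y 6, dI x y 5).
Definition U2 : C := (- dR x y 6, dI x y 5).
Definition W1 : C := (dR x y 5, dI x y 6).
Definition W2 : C := (dR x y 4, dI x y 2).
Definition W3 : C := (dR x y 3, dI x y 1).
Definition T1 : C := (- dR x y 3, dI x y 1).
Definition T2 : C := (dR x y 5, - dI x y 6).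
Definition T3 : C := (- dR x y 4, dI x y 2).
End Entries.

Definition Mx (t : R) (x y : nat -> Cx) (i k : nat) : Cx := Csub (Xp t x i k) (Xp t y i k).

Definition row_comb (M : nat -> nat -> Cx) (c : nat -> Cx) (k : nat) : C :=
  (c 0%nat * M 0%nat k + c 1%nat * M 1%nat k + c 2%nat * M 2%nat k)%C.

Lemma rank3_intro (M : nat -> nat -> Cx) :
  (forall c, (forall k, (k < 4)%nat -> row_comb M c k = 0%R) ->
     c 0%nat = C0 /\ c 1%nat = C0 /\ c 2%nat = C0) ->
  rank3_3x4 M.
Proof.
  intros H c Hc. destruct (H c Hc) as (H0 & H1 & H2).
  intros [|[|[|i]]] Hi; auto; lia.
Qed.

Lemma Mx_columns t x y (c : nat -> Cx) : let e := Cexpj t in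
  row_comb (Mx t x y) c 0 = (c 0%nat * Z1 x y + c 1%nat * Z2 x y + c 2%nat * (e * U1 x y))%C /\
  row_comb (Mx t x y) c 1
    = (c 0%nat * - Cconj (Z2 x y) + c 1%nat * Cconj (Z1 x y) + c 2%nat * (e * U2 x y))%C /\
  row_comb (Mx t x y) c 2 = (c 0%nat * (e * W1 x y) + c 1%nat * (e * W2 x y) + c 2%nat * W3 x y)%C /\
  row_comb (Mx t x y) c 3 = (c 0%nat * (e * T1 x y) + c 1%nat * (e * T2 x y) + c 2%nat * T3 x y)%C.
Proof.
  unfold row_comb, Mx, Xp, Z1, Z2, U1, U2, W1, W2, W3, T1, T2, T3, dR, dI, Cexpj,
    Csub, Cmul, Cconj, Cmult, Cplus, Copp, Defs.Re, Defs.Im; simpl.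
  repeat split; apply injective_projections; simpl; ring.
Qed.

Lemma rank_of_minor t x y k (w1 w2 w3 : C) : (k < 4)%nat ->
  (forall c, row_comb (Mx t x y) c k
     = (c 0%nat * (Cexpj t * w1) + c 1%nat * (Cexpj t * w2) + c 2%nat * w3)%C) ->
  alam_norm (Z1 x y) (Z2 x y) <> 0%R ->
  minor_det (Cexpj t) (Z1 x y) (Z2 x y) (U1 x y) (U2 x y) w1 w2 w3 <> 0%R ->
  rank3_3x4 (Mx t x y).
Proof.
  intros Hk4 Hk HN HD. apply rank3_intro. intros c Hc.
  destruct (Mx_columns t x y c) as (Col0 & Col1 & _).
  pose proof (Hc 0%nat ltac:(lia)) as E0. pose proof (Hc 1%nat ltac:(lia)) as E1.
  pose proof (Hc k Hk4) as Ek.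
  rewrite Col0 in E0. rewrite Col1 in E1. rewrite Hk in Ek.
  exact (minor_left_kernel _ _ _ _ _ _ _ _ _ _ _ HN HD E0 E1 Ek).
Qed.

(* Generic rank when the Alamouti block is non-zero and so is the entry w3:
   the minor's determinant  w3 N - e^2 K  then vanishes for at most one t. *)
Lemma Generic_rank_of_minor x y k (w1 w2 w3 : C) : (k < 4)%nat ->
  (forall t c, row_comb (Mx t x y) c k
     = (c 0%nat * (Cexpj t * w1) + c 1%nat * (Cexpj t * w2) + c 2%nat * w3)%C) ->
  Z1 x y <> 0%R \/ Z2 x y <> 0%R -> w3 <> 0%R ->
  Generic (fun t => rank3_3x4 (Mx t x y)).
Proof.
  intros Hk4 Hk Hz Hw. pose proof (alam_norm_nz _ _ Hz) as HN.
  apply Generic_one_exception. intros t1 t2 Ht1 Ht2 Hn1 Hn2.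
  apply Cexpj_sq_inj; auto.
  apply (sq_determined (w3 * alam_norm (Z1 x y) (Z2 x y))
    ((Cconj (Z1 x y) * U1 x y - Z2 x y * U2 x y) * w1
     + (Cconj (Z2 x y) * U1 x y + Z1 x y * U2 x y) * w2)%C).
  - apply Cmult_neq_0; assumption.
  - apply NNPP. intro Hd. apply Hn1. exact (rank_of_minor t1 x y k w1 w2 w3 Hk4 (Hk t1) HN Hd).
  - apply NNPP. intro Hd. apply Hn2. exact (rank_of_minor t2 x y k w1 w2 w3 Hk4 (Hk t2) HN Hd).
Qed.

(* If x and y agree in the first four coordinates, the three rows are
   separated by the entries e W1, e T2, e U1 alone. *)
Lemma rank_first_four_agree t x y :
  (forall a, (1 <= a <= 4)%nat -> x a = y a) ->
  (dR x y 5 <> 0 /\ dI x y 5 <> 0) \/ (dR x y 6 <> 0 /\ dI x y 6 <> 0) ->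
  rank3_3x4 (Mx t x y).
Proof.
  intros Hagree H56.
  assert (Hd : forall a, (1 <= a <= 4)%nat -> dR x y a = 0 /\ dI x y a = 0).
  { intros a Ha. unfold dR, dI. rewrite (Hagree a Ha). split; ring. }
  destruct (Hd 1%nat) as [p1 q1], (Hd 2%nat) as [p2 q2], (Hd 3%nat) as [p3 q3],
    (Hd 4%nat) as [p4 q4]; try lia.
  assert (HW1 : W1 x y <> 0%R) by (apply pair_nz; unfold W1; tauto).
  assert (HT2 : T2 x y <> 0%R)
    by (apply pair_nz; destruct H56 as [[A B]|[A B]]; [left | right]; lra).
  assert (HU1 : U1 x y <> 0%R) by (apply pair_nz; tauto).
  assert (Zeros : Z1 x y = 0%R /\ Z2 x y = 0%R /\ W2 x y = 0%R /\ W3 x y = 0%R /\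
                  T1 x y = 0%R /\ T3 x y = 0%R).
  { unfold Z1, Z2, W2, W3, T1, T3.
    rewrite p1, q1, p2, q2, p3, q3, p4, q4, Ropp_0. repeat split. }
  destruct Zeros as (EZ1 & EZ2 & EW2 & EW3 & ET1 & ET3).
  pose proof (Cexpj_nz t) as He.
  apply rank3_intro. intros c Hc.
  destruct (Mx_columns t x y c) as (Col0 & _ & Col2 & Col3).
  pose proof (Hc 0%nat ltac:(lia)) as E0. pose proof (Hc 2%nat ltac:(lia)) as E2.
  pose proof (Hc 3%nat ltac:(lia)) as E3.
  rewrite Col0, EZ1, EZ2 in E0. rewrite Col2, EW2, EW3 in E2. rewrite Col3, ET1, ET3 in E3.
  split; [|split].
  - apply (Cmult_eq0_r _ (Cexpj t * W1 x y)%C); [|apply Cmult_neq_0; auto].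
    rewrite <- E2. ring.
  - apply (Cmult_eq0_r _ (Cexpj t * T2 x y)%C); [|apply Cmult_neq_0; auto].
    rewrite <- E3. ring.
  - apply (Cmult_eq0_r _ (Cexpj t * U1 x y)%C); [|apply Cmult_neq_0; auto].
    rewrite <- E0. ring.
Qed.

Lemma tuple_diff_nz S x y a : nonzero_cpd S -> tuple6_in S x -> tuple6_in S y ->
  (1 <= a <= 6)%nat -> x a <> y a -> dR x y a <> 0 /\ dI x y a <> 0.
Proof.
  intros HS Hx Hy Ha Hxy.
  pose proof (HS _ _ (Hx a Ha) (Hy a Ha) Hxy) as H. unfold cpd2 in H. unfold dR, dI.
  split; intro Z; apply H; rewrite Z, Rabs_R0; ring.
Qed.

Lemma Generic_rank_pair S x y : nonzero_cpd S -> tuple6_in S x -> tuple6_in S y ->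
  tuple6_neq x y -> Generic (fun t => rank3_3x4 (Mx t x y)).
Proof.
  intros HS Hx Hy Hneq.
  assert (Col2 : forall t c, row_comb (Mx t x y) c 2
     = (c 0%nat * (Cexpj t * W1 x y) + c 1%nat * (Cexpj t * W2 x y) + c 2%nat * W3 x y)%C)
    by (intros t c; apply (Mx_columns t x y c)).
  assert (Col3 : forall t c, row_comb (Mx t x y) c 3
     = (c 0%nat * (Cexpj t * T1 x y) + c 1%nat * (Cexpj t * T2 x y) + c 2%nat * T3 x y)%C)
    by (intros t c; apply (Mx_columns t x y c)).
  destruct (classic (exists a, (1 <= a <= 4)%nat /\ x a <> y a)) as [[a [Ha Hxy]]|Hagree].
  - (* a differing coordinate among 1..4: one of the minors is non-degenerate *)
    destruct (tuple_diff_nz S x y a HS Hx Hy ltac:(lia) Hxy) as [HR HI].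
    destruct a as [|[|[|[|[|a]]]]]; try lia.
    + apply (Generic_rank_of_minor x y 2 _ _ _ ltac:(lia) Col2);
        [left; apply pair_nz | apply pair_nz]; auto.
    + apply (Generic_rank_of_minor x y 3 _ _ _ ltac:(lia) Col3);
        [right; apply pair_nz | apply pair_nz]; auto.
    + apply (Generic_rank_of_minor x y 2 _ _ _ ltac:(lia) Col2);
        [left; apply pair_nz | apply pair_nz]; auto.
    + apply (Generic_rank_of_minor x y 3 _ _ _ ltac:(lia) Col3);
        [right; apply pair_nz | apply pair_nz]; auto.
      left. intro Z. apply HR. lra.
  -
    apply Generic_true. intros t _. apply rank_first_four_agree.
    + intros a Ha. apply NNPP. intro Hxy. apply Hagree. exists a. auto.
    + destruct Hneq as [a [Ha Hxy]].
      destruct (tuple_diff_nz S x y a HS Hx Hy Ha Hxy).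
      assert (Ha56 : a = 5%nat \/ a = 6%nat).
      { apply NNPP. intro Hnot. apply Hagree. exists a. split; [lia | exact Hxy]. }
      destruct Ha56 as [->| ->]; tauto.
Qed.

Fixpoint tuples {A : Type} (l : list A) (n : nat) : list (list A) :=
  match n with
  | O => nil :: nil
  | S n' => flat_map (fun a => map (cons a) (tuples l n')) l
  end.

Lemma In_tuples {A : Type} (l : list A) (x : nat -> A) n m :
  (forall a, (m <= a < m + n)%nat -> In (x a) l) -> In (map x (seq m n)) (tuples l n).
Proof.
  revert m. induction n as [|n IH]; intros m Hx; simpl; [left; reflexivity|].
  apply in_flat_map. exists (x m). split; [apply Hx; lia|].
  apply in_map, IH. intros a Ha. apply Hx. lia.
Qed.

Lemma map_seq_agree {A : Type} (x x' : nat -> A) n m :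
  map x (seq m n) = map x' (seq m n) -> forall a, (m <= a < m + n)%nat -> x a = x' a.
Proof.
  revert m. induction n as [|n IH]; intros m E a Ha; simpl in E; [lia|].
  injection E as Em E. destruct (PeanoNat.Nat.eq_dec a m) as [->|Hne]; auto.
  apply (IH (S m)); auto; lia.
Qed.

Lemma Mx_local t x y x' y' :
  (forall a, (1 <= a <= 6)%nat -> x a = x' a) ->
  (forall a, (1 <= a <= 6)%nat -> y a = y' a) -> Mx t x y = Mx t x' y'.
Proof.
  intros Hx Hy. apply functional_extensionality; intro i.
  apply functional_extensionality; intro k. unfold Mx, Xp.
  rewrite (Hx 1%nat), (Hx 2%nat), (Hx 3%nat), (Hx 4%nat), (Hx 5%nat), (Hx 6%nat),
    (Hy 1%nat), (Hy 2%nat), (Hy 3%nat), (Hy 4%nat), (Hy 5%nat), (Hy 6%nat) by lia.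
  reflexivity.
Qed.

(* For one set: quantify over the finitely many pairs (u, v) of value lists. *)
Lemma Generic_rank_set S : nonzero_cpd S ->
  Generic (fun t => forall x y, tuple6_in S x -> tuple6_in S y -> tuple6_neq x y ->
    rank3_3x4 (Mx t x y)).
Proof.
  intros HS.
  apply (Generic_mono (fun t => forall u, In u (tuples S 6) -> forall v, In v (tuples S 6) ->
    forall x y, map x (seq 1 6) = u -> map y (seq 1 6) = v ->
    tuple6_in S x -> tuple6_in S y -> tuple6_neq x y -> rank3_3x4 (Mx t x y))).
  { intros t H x y Hx Hy Hn.
    apply (H _ (In_tuples S x 6 1 (fun a Ha => Hx a ltac:(lia)))
             _ (In_tuples S y 6 1 (fun a Ha => Hy a ltac:(lia))) x y); auto. }
  apply Generic_forall_In; intros u _. apply Generic_forall_In; intros v _.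
  destruct (classic (exists x0 y0, map x0 (seq 1 6) = u /\ map y0 (seq 1 6) = v /\
    tuple6_in S x0 /\ tuple6_in S y0 /\ tuple6_neq x0 y0))
    as [(x0 & y0 & Ex0 & Ey0 & Hx0 & Hy0 & Hn0)|Hnone].
  - apply (Generic_mono (fun t => rank3_3x4 (Mx t x0 y0))).
    + intros t Hr x y Ex Ey _ _ _.
      rewrite (Mx_local t x y x0 y0); [exact Hr | |];
        intros a Ha; apply (map_seq_agree _ _ 6 1); solve [congruence | lia].
    + exact (Generic_rank_pair S x0 y0 HS Hx0 Hy0 Hn0).
  - apply Generic_true. intros t _ x y Ex Ey Hx Hy Hn.
    exfalso. apply Hnone. exists x, y. auto.
Qed.

Theorem lemma1 (Ss : list (list Cx)) :
  (forall S, In S Ss -> nonzero_cpd S) ->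
  exists t : R, 0 <= t <= 2 * PI /\
    forall S, In S Ss ->
    forall x y : nat -> Cx, tuple6_in S x -> tuple6_in S y -> tuple6_neq x y ->
      rank3_3x4 (fun i k => Csub (Xp t x i k) (Xp t y i k)).
Proof.
  intros HSs.
  assert (G : Generic (fun t => forall S, In S Ss ->
    forall x y, tuple6_in S x -> tuple6_in S y -> tuple6_neq x y -> rank3_3x4 (Mx t x y))).
  { apply Generic_forall_In. intros S HS. exact (Generic_rank_set S (HSs S HS)). }
  pose proof PI_RGT_0.
  destruct (G 0 (PI / 2)) as (a & b & Ha & Hab & Hb & Hgood); try lra.
  exists ((a + b) / 2). split; [lra|]. apply Hgood. lra.
Qed.
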